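(* Let $\mathbb{S}$ be a collection of subsets of $\{1,\dots,m\}$, each of size $l$, and let $t$ be a positive integer. Then $$\frac{1}{|\mathbb{S}|^2}\sum_{\mathcal{J},\mathcal{J}'\in\mathbb{S}}|\mathcal{J}\cap\mathcal{J}'|^t\ \ge\ \mathrm{tr}(D_{t,l,m}^2),$$ and equality holds if and only if $\mathbb{S}$ is a $t$-$(m,l,\lambda)$ block design with $\lambda=|\mathbb{S}|\,\mathrm{tr}\big(D_{t,l,m}\bigotimes_{s=1}^tE_{s,s}\big)$.
   Context: Let $\{e_j\}_{j=1}^m$ be the canonical basis of $\mathbb{F}^m$ ($\mathbb{F}=\mathbb{R}$ or $\mathbb{C}$) and $E_{s,s}=e_s\otimes e_s^*$. For $\mathcal{J}\subset\{1,\dots,m\}$ let $D_{\mathcal{J}}=\sum_{j\in\mathcal{J}}E_{j,j}$. The diagonal coherence tensor is $D_{t,l,m}=\binom{m}{l}^{-1}\sum_{\mathcal{J}\in\mathbb{J}}D_{\mathcal{J}}^{\otimes t}$, where $\mathbb{J}$ is the set of all $l$-element subsets of $\{1,\dots,m\}$ and $^{\otimes t}$ is the $t$-fold Kronecker product. A $t$-$(m,l,\lambda)$ block design is a collection of subsets (blocks) of $\{1,\dots,m\}$, each of cardinality $l$, such that every $t$-element subset of $\{1,\dots,m\}$ is contained in exactly $\lambda$ blocks. *)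

From mathcomp Require Import all_boot all_order all_algebra.
From mathcomp Require Import mxtens.
Set Implicit Arguments.
Unset Strict Implicit.
Unset Printing Implicit Defensive.
Import Order.TTheory GRing.Theory Num.Theory.
Local Open Scope ring_scope.

(* Size of a t-fold Kronecker power of m x m matrices: m^t,
   computed so that kdim m t.+1 = kdim m t * m definitionally. *)
Fixpoint kdim (m t : nat) : nat :=
  if t is t'.+1 then (kdim m t' * m)%N else 1%N.

Fixpoint kron_prod (R : pzRingType) (m : nat) (A : nat -> 'M[R]_m) (t : nat)
  : 'M[R]_(kdim m t) :=
  if t is t'.+1 then tensmx (kron_prod A t') (A t) else 1%:M.

Definition kron_pow (R : pzRingType) (m : nat) (A : 'M[R]_m) (t : nat) :=
  kron_prod (fun _ => A) t.

(* E_{s,s} = e_s (x) e_s^*, with 1-based index s (entry (s-1,s-1) in 'I_m). *)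
Definition Ess (R : pzRingType) (m s : nat) : 'M[R]_m :=
  \matrix_(i, j) ((i == j) && (nat_of_ord i == s.-1))%:R.

Definition DJ (R : pzRingType) (m : nat) (J : {set 'I_m}) : 'M[R]_m :=
  \matrix_(i, j) ((i == j) && (i \in J))%:R.

Definition Dcoh (R : fieldType) (t l m : nat) : 'M[R]_(kdim m t) :=
  ('C(m, l)%:R)^-1 *: \sum_(J : {set 'I_m} | #|J| == l) kron_pow (DJ R J) t.

(* t-(m,l,lambda) block design; blocks given as a sequence (repeated blocks
   allowed, as is standard in design theory). *)
Definition is_block_design (m t l lambda : nat) (S : seq {set 'I_m}) : Prop :=
  (forall B, B \in S -> #|B| = l) /\
  (forall T : {set 'I_m}, #|T| = t -> count (fun B : {set 'I_m} => T \subset B) S = lambda).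

(* Index the t-fold Kronecker power by the words x = (x_1, ..., x_t) over 'I_m and let
   U(x) be the set of letters of x.  The matrices D_J^(x)t and (x)_s E_{s,s} are diagonal
   with entries [U(x) \subset J] and [x == (1, ..., t)], so D_{t,l,m} is diagonal with
   entry g(U(x)), the fraction of all l-sets containing U(x).  As |J :&: J'|^t counts the
   words with letters in J :&: J', the left-hand side is sum_x f(U(x))^2, where f(U) is the
   fraction of the blocks of S containing U.  Permuting letters shows that
   sum_x [U(x) \subset J] g(U(x)) is the same for every l-set J; averaging over the blocks
   gives sum_x f g = sum_x g^2, i.e. lhs - rhs = sum_x (f - g)^2.  Equality thus means f = g
   on all sets of at most t points, and double counting the flags U \subset T \subset B
   shows that this is exactly the t-design property. *)

From mathcomp Require Import all_boot all_order all_algebra all_fingroup.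
From mathcomp Require Import mxtens ring.
Set Implicit Arguments.
Unset Strict Implicit.
Unset Printing Implicit Defensive.
Import Order.TTheory GRing.Theory Num.Theory.

Section KroneckerWords.
Variable m : nat.

Fixpoint kron_word t : 'I_(kdim m t) -> seq 'I_m :=
  if t is t'.+1 then fun x =>
    rcons (@kron_word t' (mxtens_unindex x).1) (mxtens_unindex x).2
  else fun=> [::].

(* [P s x_s] at every position [s], counted from 1 as in [Ess]. *)
Fixpoint kron_all (P : nat -> pred 'I_m) t : 'I_(kdim m t) -> bool :=
  if t is t'.+1 then fun x =>
    @kron_all P t' (mxtens_unindex x).1 && P t (mxtens_unindex x).2
  else fun=> true.

Fixpoint kron_perm (s : {perm 'I_m}) t : 'I_(kdim m t) -> 'I_(kdim m t) :=
  if t is t'.+1 then fun x =>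
    mxtens_index (@kron_perm s t' (mxtens_unindex x).1, s (mxtens_unindex x).2)
  else id.

Definition kron_support t (x : 'I_(kdim m t)) : {set 'I_m} := [set i in kron_word x].

Lemma kron_wordS t (x : 'I_(kdim m t.+1)) :
  kron_word x = rcons (kron_word (mxtens_unindex x).1) (mxtens_unindex x).2.
Proof. by []. Qed.

Lemma kron_allS P t (x : 'I_(kdim m t.+1)) :
  kron_all P x = kron_all P (mxtens_unindex x).1 && P t.+1 (mxtens_unindex x).2.
Proof. by []. Qed.

Lemma kron_permS s t (x : 'I_(kdim m t.+1)) :
  kron_perm s x = mxtens_index (kron_perm s (mxtens_unindex x).1, s (mxtens_unindex x).2).
Proof. by []. Qed.

Lemma size_kron_word t (x : 'I_(kdim m t)) : size (kron_word x) = t.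
Proof. by elim: t x => [|t IHt] x //; rewrite kron_wordS size_rcons IHt. Qed.

Lemma kron_word_inj t : injective (@kron_word t).
Proof.
elim: t => [|t IHt] x y; first by move=> _; rewrite !ord1.
rewrite !kron_wordS => /eqP; rewrite eqseq_rcons => /andP[/eqP/IHt eq1 /eqP eq2].
apply: (can_inj (@mxtens_unindexK _ _)).
by rewrite [mxtens_unindex x]surjective_pairing [mxtens_unindex y]surjective_pairing eq1 eq2.
Qed.

Lemma kron_word_onto t (w : seq 'I_m) :
  size w = t -> exists x : 'I_(kdim m t), kron_word x = w.
Proof.
elim: t w => [|t IHt] w; first by move/size0nil->; exists ord0.
case/lastP: w => [//|w i]; rewrite size_rcons => -[/IHt[x wx]].
by exists (mxtens_index (x, i)); rewrite kron_wordS mxtens_indexK wx.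
Qed.

Lemma card_kron_support_le t (x : 'I_(kdim m t)) : #|kron_support x| <= t.
Proof. by rewrite cardsE; have := card_size (kron_word x); rewrite size_kron_word. Qed.

Lemma kron_support_onto t (T : {set 'I_m}) :
  #|T| = t -> exists x : 'I_(kdim m t), kron_support x = T.
Proof.
rewrite cardE => /kron_word_onto[x wx].
by exists x; rewrite /kron_support wx set_enum.
Qed.

Lemma kron_all_subset (A : {set 'I_m}) t (x : 'I_(kdim m t)) :
  kron_all (fun _ i => i \in A) x = (kron_support x \subset A).
Proof.
rewrite /kron_support; elim: t x => [|t IHt] x.
  by apply/esym/subsetP => i; rewrite inE.
rewrite kron_allS kron_wordS IHt; apply/andP/subsetP => [[/subsetP sxA iA] i|sxA].
  by rewrite inE mem_rcons inE => /predU1P[->|ix]//; apply: sxA; rewrite inE.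
split; last by apply: sxA; rewrite inE mem_rcons mem_head.
by apply/subsetP => i; rewrite inE => ix; apply: sxA; rewrite inE mem_rcons inE ix orbT.
Qed.

Lemma kron_all_iota t (x : 'I_(kdim m t)) :
  kron_all (fun s i => val i == s.-1) x = (map val (kron_word x) == iota 0 t).
Proof.
elim: t x => [|t IHt] x //.
have -> : iota 0 t.+1 = rcons (iota 0 t) t by rewrite -cats1 -addn1 iotaD.
by rewrite kron_allS kron_wordS IHt map_rcons eqseq_rcons.
Qed.

Lemma kron_word_perm s t (x : 'I_(kdim m t)) :
  kron_word (kron_perm s x) = map s (kron_word x).
Proof.
by elim: t x => [|t IHt] x //; rewrite kron_permS !kron_wordS mxtens_indexK IHt map_rcons.
Qed.

Lemma kron_perm_inj s t : injective (@kron_perm s t).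
Proof.
move=> x y eq_sxy; apply: kron_word_inj; apply: (inj_map (@perm_inj _ s)).
by rewrite -!kron_word_perm eq_sxy.
Qed.

Lemma kron_support_perm s t (x : 'I_(kdim m t)) :
  kron_support (kron_perm s x) = s @: kron_support x.
Proof.
apply/setP => i; rewrite /kron_support inE kron_word_perm.
by apply/mapP/imsetP => -[j jx ->]; exists j; rewrite ?inE in jx *.
Qed.

End KroneckerWords.

Section PermutedSets.
Variable T : finType.

Lemma perm_imset_subset (s : {perm T}) (A B : {set T}) :
  (s @: A \subset s @: B) = (A \subset B).
Proof.
apply/idP/idP => [sAB|]; last exact: imsetS.
apply/subsetP => x xA; have := subsetP sAB (s x).
by rewrite !(mem_imset _ _ (@perm_inj _ s)); apply.
Qed.

Lemma perm_imset_eq_card (A B : {set T}) :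
  #|A| = #|B| -> exists s : {perm T}, s @: A = B.
Proof.
(* Induction on #|A :\: B|: a transposition moves a point of A :\: B onto one of B :\: A. *)
move: {2}#|A :\: B| (erefl #|A :\: B|) => n; elim: n A => [|n IHn] A cardAB eqAB.
  exists 1%g; rewrite imset_perm1; apply/eqP; rewrite eqEcard eqAB leqnn andbT.
  by rewrite -setD_eq0 -cards_eq0 cardAB.
have /set0Pn[a] : A :\: B != set0 by rewrite -cards_eq0 cardAB.
have /set0Pn[b] : B :\: A != set0.
  by rewrite -cards_eq0 cardsD setIC -eqAB -cardsD cardAB.
rewrite !inE => /andP[bA bB] /andP[aB aA].
pose A' := tperm a b @: A.
have A'E x : (x \in A') = (tperm a b x \in A).
  by rewrite -{1}[x](tpermK a b) (mem_imset _ _ (@perm_inj _ (tperm a b))).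
have [s sA'] : exists s : {perm T}, s @: A' = B.
  apply: IHn; last by rewrite card_imset //; apply: perm_inj.
  suff -> : A' :\: B = (A :\: B) :\ a by rewrite (cardsD1 a) !inE aB aA in cardAB; case: cardAB.
  apply/setP => x; rewrite !inE A'E.
  by case: tpermP => [->|->|/eqP xa _]; rewrite ?eqxx ?bB ?(negbTE bA) ?xa ?andbF.
by exists (tperm a b * s)%g; rewrite -sA' -imset_comp; apply: eq_imset => x; rewrite permM.
Qed.

Lemma card_draws_between (U B : {set T}) k : U \subset B -> #|U| <= k ->
  #|[set X : {set T} | [&& #|X| == k, U \subset X & X \subset B]]| =
  'C(#|B| - #|U|, k - #|U|).
Proof.
move=> sUB leUk; rewrite -(cardsDS sUB) -cards_draws.
rewrite -(card_in_imset (f := fun X => X :\: U)); last first.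
  move=> X Y; rewrite !inE => /and3P[_ sUX _] /and3P[_ sUY _] eqXY.
  by rewrite -(setID X U) -(setID Y U) (setIidPr sUX) (setIidPr sUY) eqXY.
apply: eq_card => Y; rewrite [in RHS]inE; apply/imsetP/andP => [[X]|[sYBU /eqP cardY]].
  rewrite inE => /and3P[/eqP cardX sUX sXB] ->.
  split; first exact: setSD.
  by rewrite cardsDS // cardX.
have disYU : [disjoint Y & U].
  by rewrite disjoints_subset (subset_trans sYBU) // setDE subsetIr.
exists (Y :|: U); last by rewrite setDUl setDv setU0 (setDidPl disYU).
rewrite inE cardsU (disjoint_setI0 disYU) cards0 subn0 cardY subnK // subsetUr.
by rewrite eqxx subUset sUB andbT (subset_trans sYBU) ?subsetDl.
Qed.

End PermutedSets.

Lemma count_sum (T : Type) (a : pred T) (s : seq T) : count a s = \sum_(x <- s) a x.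
Proof. by rewrite -sumn_count sumnE big_map. Qed.

Section BlockDesigns.
Variable m : nat.
Implicit Types (S : seq {set 'I_m}) (U : {set 'I_m}).

Definition count_sup S U : nat := count (fun B : {set 'I_m} => U \subset B) S.

Definition complete_design l : seq {set 'I_m} := enum [set J : {set 'I_m} | #|J| == l].

Lemma size_complete_design l : size (complete_design l) = 'C(m, l).
Proof. by rewrite -cardE card_draws card_ord. Qed.

Lemma count_complete_design l U : #|U| <= l ->
  count_sup (complete_design l) U = 'C(m - #|U|, l - #|U|).
Proof.
move=> leUl; rewrite /count_sup count_sum big_enum /= -big_mkcondr sum_nat_cond_const muln1.
rewrite -[m in 'C(m - _, _)]card_ord -cardsT -card_draws_between ?subsetT //.
by apply: eq_card => J; rewrite !inE subsetT andbT.
Qed.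

Lemma complete_design_is_block_design t l : t <= l ->
  is_block_design t l 'C(m - t, l - t) (complete_design l).
Proof.
move=> letl; split=> [B|T cardT]; first by rewrite mem_enum inE => /eqP.
by rewrite -/(count_sup _ T) count_complete_design cardT.
Qed.

Lemma count_subset_design t l lambda S U :
  is_block_design t l lambda S -> #|U| <= t ->
  count_sup S U * 'C(l - #|U|, t - #|U|) =
  lambda * 'C(m - #|U|, t - #|U|).
Proof.
move=> [cardS countS] leUt.
(* Count the pairs (T, B) with U \subset T \subset B, #|T| = t and B in S in two ways. *)
pose TU := [set T : {set 'I_m} | [&& #|T| == t, U \subset T & T \subset setT]].
have <- : \sum_(T in TU) count_sup S T = lambda * 'C(m - #|U|, t - #|U|).
  rewrite (eq_bigr (fun=> lambda)) => [|T]; last by rewrite inE => /and3P[/eqP/countS].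
  by rewrite sum_nat_const card_draws_between ?subsetT // cardsT card_ord mulnC.
under eq_bigr do rewrite /count_sup count_sum.
rewrite exchange_big /count_sup count_sum big_distrl /=; apply: eq_big_seq => B SB.
rewrite -big_mkcondr sum_nat_cond_const muln1.
have [sUB|nsUB] := boolP (U \subset B).
  rewrite mul1n -(cardS B SB) -card_draws_between //.
  by apply: eq_card => T; rewrite !inE subsetT andbT -andbA.
apply/esym/eqP; rewrite mul0n cards_eq0; apply/eqP/setP => T; rewrite !inE.
by apply/negbTE; apply: contra nsUB => /andP[/and3P[_ sUT _] sTB]; apply: subset_trans sTB.
Qed.

Lemma count_subset_design_cross t l lambda1 lambda2 S1 S2 U :
  is_block_design t l lambda1 S1 -> is_block_design t l lambda2 S2 ->
  #|U| <= t -> t <= l ->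
  count_sup S1 U * size S2 = count_sup S2 U * size S1.
Proof.
move=> des1 des2 leUt letl.
have count0 S : count_sup S set0 = size S.
  by rewrite /count_sup (eq_count (a2 := predT)) ?count_predT // => B; rewrite sub0set.
have le0t : #|(set0 : {set 'I_m})| <= t by rewrite cards0.
have size_design S lambda : is_block_design t l lambda S ->
    size S * 'C(l, t) = lambda * 'C(m, t).
  by move/count_subset_design/(_ le0t); rewrite cards0 !subn0 count0.
have binom_gt0 : 0 < 'C(l - #|U|, t - #|U|) * 'C(l, t).
  by rewrite muln_gt0 !bin_gt0 letl leq_sub2r.
apply/eqP; rewrite -(eqn_pmul2r binom_gt0); apply/eqP.
rewrite mulnACA (count_subset_design des1) // (size_design _ _ des2).
rewrite [RHS]mulnACA (count_subset_design des2) // (size_design _ _ des1).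
by rewrite mulnACA [RHS]mulnACA (mulnC lambda1).
Qed.

End BlockDesigns.

Local Open Scope ring_scope.

Lemma sum_kron_support_subset (R : pzRingType) m t (A : {set 'I_m}) :
  \sum_(x : 'I_(kdim m t)) (kron_support x \subset A)%:R = (#|A| ^ t)%:R :> R.
Proof.
elim: t => [|t IHt].
  rewrite big_ord1 expn0; suff -> : kron_support (ord0 : 'I_(kdim m 0)) = set0 by rewrite sub0set.
  by apply/setP => i; rewrite inE.
rewrite expnS mulnC natrM -IHt -sum1_card natr_sum [\sum_(i in A) _]big_mkcond mulr_sum.
apply: eq_bigr => x _; rewrite -!kron_all_subset kron_allS.
by case: (_ \in A); rewrite ?mulr1 ?mulr0 ?andbT ?andbF.
Qed.

Lemma mx_indicator_diag (R : pzRingType) n (P : pred 'I_n) :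
  \matrix_(i, j) ((i == j) && P i)%:R = diag_mx (\row_i (P i)%:R) :> 'M[R]_n.
Proof. by apply/matrixP => i j; rewrite !mxE; case: eqP => [->|]; rewrite ?andbF. Qed.

Lemma kron_prod_diag (R : pzRingType) m (A : nat -> 'M[R]_m) (P : nat -> pred 'I_m) t :
  (forall s, A s = diag_mx (\row_i (P s i)%:R)) ->
  kron_prod A t = diag_mx (\row_x (kron_all P x)%:R).
Proof.
move=> AE; elim: t => [|t IHt]; first by apply/matrixP => x y; rewrite !mxE.
rewrite -[kron_prod A t.+1]/(tensmx (kron_prod A t) (A t.+1)) IHt AE.
apply/matrixP => x y.
rewrite -[x]mxtens_unindexK -[y]mxtens_unindexK.
case: (mxtens_unindex x) => i j; case: (mxtens_unindex y) => k l.
rewrite tensmxE !mxE kron_allS mxtens_indexK (inj_eq (can_inj (@mxtens_indexK _ _))).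
by rewrite /= xpair_eqE mulrnAl mulrnAr -mulrnA -natrM !mulnb [(j == l) && _]andbC.
Qed.

Lemma mxtrace_mul_diag (R : pzRingType) n (a b : 'I_n -> R) :
  \tr (diag_mx (\row_i a i) *m diag_mx (\row_i b i)) = \sum_i a i * b i.
Proof. by rewrite mulmx_diag mxtrace_diag; apply: eq_bigr => i _; rewrite !mxE. Qed.

Definition block_freq (R : fieldType) m (S : seq {set 'I_m}) (U : {set 'I_m}) : R :=
  (count_sup S U)%:R / (size S)%:R.

Lemma DcohE (R : fieldType) t l m :
  Dcoh R t l m = diag_mx (\row_x block_freq R (complete_design m l) (kron_support x)).
Proof.
have DJE (J : {set 'I_m}) : DJ R J = diag_mx (\row_i (i \in J)%:R).
  exact: mx_indicator_diag.
apply/matrixP => x y; rewrite /Dcoh /kron_pow !mxE summxE.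
under eq_bigr => J _ do rewrite (kron_prod_diag _ (fun=> DJE J)) !mxE kron_all_subset.
rewrite sumrMnl mulrnAr mulrC /block_freq; congr (_ * _^-1 *+ _).
  rewrite /count_sup count_sum natr_sum big_enum /=.
  by apply: eq_bigl => J; rewrite inE.
by rewrite size_complete_design.
Qed.

Lemma block_freq_complete_design (R : fieldType) m l (U : {set 'I_m}) : (#|U| <= l)%N ->
  block_freq R (complete_design m l) U = 'C(m - #|U|, l - #|U|)%:R / 'C(m, l)%:R.
Proof. by move=> leUl; rewrite /block_freq count_complete_design // size_complete_design. Qed.

Lemma sum_card_setI_exp (R : pzRingType) m t (S : seq {set 'I_m}) :
  \sum_(J <- S) \sum_(J' <- S) (#|J :&: J'| ^ t)%:R =
  \sum_(x : 'I_(kdim m t)) (count_sup S (kron_support x))%:R ^+ 2 :> R.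
Proof.
under eq_bigr => J _ do under eq_bigr => J' _ do rewrite -(sum_kron_support_subset R t).
under eq_bigr do rewrite exchange_big /=.
rewrite exchange_big; apply: eq_bigr => x _.
rewrite expr2 /count_sup count_sum natr_sum big_distrlr; apply: eq_bigr => J _.
by apply: eq_bigr => J' _ /=; rewrite subsetI -natrM mulnb.
Qed.

Lemma mean_card_setI_exp (R : fieldType) m t (S : seq {set 'I_m}) :
  ((size S)%:R ^+ 2)^-1 * \sum_(J <- S) \sum_(J' <- S) (#|J :&: J'| ^ t)%:R =
  \sum_(x : 'I_(kdim m t)) block_freq R S (kron_support x) ^+ 2.
Proof.
rewrite sum_card_setI_exp mulr_sumr; apply: eq_bigr => x _.
by rewrite /block_freq expr_div_n mulrC.
Qed.

Lemma sum_kron_support_subset_eq_card (R : pzRingType) m t (phi : nat -> R)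
    (J J' : {set 'I_m}) : #|J| = #|J'| ->
  \sum_(x : 'I_(kdim m t)) (kron_support x \subset J)%:R * phi #|kron_support x| =
  \sum_(x : 'I_(kdim m t)) (kron_support x \subset J')%:R * phi #|kron_support x|.
Proof.
case/perm_imset_eq_card => s <-; rewrite [RHS](reindex_inj (@kron_perm_inj m s t)).
apply: eq_bigr => x _; rewrite kron_support_perm perm_imset_subset card_imset //.
exact: perm_inj.
Qed.

Lemma sumr_const_seq (V : nmodType) (I : Type) (r : seq I) (v : V) :
  \sum_(i <- r) v = v *+ size r.
Proof. by elim: r => [|i r IHr]; rewrite ?big_nil ?big_cons ?IHr ?mulrS. Qed.

Lemma sum_block_freq_mul (R : numFieldType) m t (phi : nat -> R) (S : seq {set 'I_m})
    (J0 : {set 'I_m}) : size S != 0%N -> (forall J, J \in S -> #|J| = #|J0|) ->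
  \sum_(x : 'I_(kdim m t)) block_freq R S (kron_support x) * phi #|kron_support x| =
  \sum_(x : 'I_(kdim m t)) (kron_support x \subset J0)%:R * phi #|kron_support x|.
Proof.
move=> S_neq0 cardS.
transitivity ((size S)%:R^-1 *
    \sum_(J <- S) \sum_(x : 'I_(kdim m t)) (kron_support x \subset J)%:R * phi #|kron_support x|).
  rewrite exchange_big mulr_sumr; apply: eq_bigr => x _.
  by rewrite /block_freq /count_sup count_sum natr_sum mulrAC mulr_suml mulrC.
rewrite (eq_big_seq _ (fun J JS => sum_kron_support_subset_eq_card t phi (cardS J JS))).
by rewrite sumr_const_seq mulrnAr -mulr_natr mulrAC mulVf ?mul1r // pnatr_eq0.
Qed.

Lemma sum_block_freq_mul_complete (R : numFieldType) m t l (S : seq {set 'I_m}) :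
  size S != 0%N -> (forall J, J \in S -> #|J| = l) -> (t <= l <= m)%N ->
  \sum_(x : 'I_(kdim m t)) block_freq R S (kron_support x) *
                           block_freq R (complete_design m l) (kron_support x) =
  \sum_(x : 'I_(kdim m t)) block_freq R (complete_design m l) (kron_support x) *
                           block_freq R (complete_design m l) (kron_support x).
Proof.
move=> S_neq0 cardS /andP[letl lelm].
have [J0 J0S] : exists J0, J0 \in S by exists (nth set0 S 0); rewrite mem_nth // lt0n.
pose phi k : R := 'C(m - k, l - k)%:R / 'C(m, l)%:R.
have gE (x : 'I_(kdim m t)) :
    block_freq R (complete_design m l) (kron_support x) = phi #|kron_support x|.
  by rewrite block_freq_complete_design // (leq_trans (card_kron_support_le x)).
under eq_bigr => x _ do rewrite [X in _ * X]gE.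
under [RHS]eq_bigr => x _ do rewrite [X in _ * X]gE.
have S0_neq0 : size (complete_design m l) != 0%N.
  by rewrite size_complete_design -lt0n bin_gt0.
rewrite !(@sum_block_freq_mul _ _ _ _ _ J0) // => J; rewrite (cardS _ J0S).
  by rewrite mem_enum inE => /eqP.
exact: cardS.
Qed.

Lemma sumr_sqr_sub (R : comPzRingType) (I : finType) (f g : I -> R) :
  \sum_i f i * g i = \sum_i g i * g i ->
  \sum_i f i ^+ 2 - \sum_i g i ^+ 2 = \sum_i (f i - g i) ^+ 2.
Proof.
move=> fg; transitivity (\sum_i (f i ^+ 2 - g i ^+ 2) - 2%:R * \sum_i (f i * g i - g i * g i)).
  by rewrite [X in _ - _ * X]sumrB fg subrr mulr0 subr0 sumrB.
by rewrite mulr_sumr -sumrB; apply: eq_bigr => i _; ring.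
Qed.

Lemma sub_eq_sumr_sqr (R : numDomainType) (I : finType) (a b : R) (f g : I -> R) :
  (forall i, f i - g i \is Num.real) -> a - b = \sum_i (f i - g i) ^+ 2 ->
  b <= a /\ (a = b <-> forall i, f i = g i).
Proof.
move=> real_fg abE; split; first by rewrite -subr_ge0 abE sumr_ge0 // => i _; rewrite -realEsqr.
split=> [/eqP|fg]; last by apply/eqP; rewrite -subr_eq0 abE big1 // => i _; rewrite fg subrr expr0n.
rewrite -subr_eq0 abE => /eqP sum0 i; apply/eqP; rewrite -subr_eq0 -sqrf_eq0; apply/eqP.
by apply: (psumr_eq0P _ sum0) => // j _; rewrite -realEsqr.
Qed.

Lemma set_take_enum_ord m t : (t <= m)%N ->
  [set i in take t (enum 'I_m)] = [set i : 'I_m | (i < t)%N].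
Proof.
move=> letm; apply/setP => i.
by rewrite !inE -(mem_map val_inj) map_take val_enum_ord take_iota (minn_idPl letm) mem_iota.
Qed.

Lemma card_ord_ltn m t : (t <= m)%N -> #|[set i : 'I_m | (i < t)%N]| = t.
Proof.
move=> letm; rewrite -set_take_enum_ord // cardsE (card_uniqP _) ?take_uniq ?enum_uniq //.
by rewrite size_takel // size_enum_ord.
Qed.

Lemma mxtrace_Dcoh_kron_Ess (R : fieldType) t l m : (t <= m)%N ->
  \tr (Dcoh R t l m *m kron_prod (fun s => Ess R m s) t) =
  block_freq R (complete_design m l) [set i : 'I_m | (i < t)%N].
Proof.
move=> letm; have EssE s : Ess R m s = diag_mx (\row_i (val i == s.-1)%:R).
  exact: mx_indicator_diag.
rewrite DcohE (kron_prod_diag _ EssE) mxtrace_mul_diag.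
have [x0 wx0] : exists x0 : 'I_(kdim m t), kron_word x0 = take t (enum 'I_m).
  by apply: kron_word_onto; rewrite size_takel // size_enum_ord.
have iota_x0 : map val (kron_word x0) = iota 0 t.
  by rewrite wx0 map_take val_enum_ord take_iota (minn_idPl letm).
rewrite (bigD1 x0) //= big1 => [|x xx0]; last first.
  rewrite kron_all_iota; case: eqP => [wx|]; last by rewrite mulr0.
  by case/eqP: xx0; apply: kron_word_inj; apply: (inj_map val_inj); rewrite wx iota_x0.
by rewrite kron_all_iota iota_x0 eqxx mulr1 addr0 /kron_support wx0 set_take_enum_ord.
Qed.

Lemma block_freq_design (R : numFieldType) m t l lambda (S : seq {set 'I_m})
    (U : {set 'I_m}) :
  is_block_design t l lambda S -> size S != 0%N -> (#|U| <= t)%N -> (t <= l <= m)%N ->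
  block_freq R S U = block_freq R (complete_design m l) U.
Proof.
move=> desS S_neq0 leUt /andP[letl lelm].
have := count_subset_design_cross desS (complete_design_is_block_design m letl) leUt letl.
rewrite /block_freq size_complete_design => cross; apply/eqP.
by rewrite eqr_div ?pnatr_eq0 ?S_neq0 -?lt0n ?bin_gt0 // -!natrM eqr_nat cross.
Qed.

Lemma block_design_of_block_freq (R : numFieldType) m t l (S : seq {set 'I_m})
    (T0 : {set 'I_m}) :
  (forall J, J \in S -> #|J| = l) -> size S != 0%N -> #|T0| = t -> (t <= l)%N ->
  (forall T : {set 'I_m}, #|T| = t -> block_freq R S T = block_freq R (complete_design m l) T) ->
  is_block_design t l (count_sup S T0) S.
Proof.
move=> cardS S_neq0 cardT0 letl freqS; split=> // T cardT.
have : block_freq R S T = block_freq R S T0.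
  by rewrite !freqS // !block_freq_complete_design ?cardT ?cardT0.
have n_neq0 : (size S)%:R != 0 :> R by rewrite pnatr_eq0.
by move/(congr1 ( *%R^~ (size S)%:R)); rewrite !divfK // => /eqP; rewrite eqr_nat => /eqP.
Qed.

Unset Implicit Arguments.

Theorem corollary3p16 (R : numFieldType) (m l t : nat) (S : seq {set 'I_m})
  (HS : size S != 0%N)
  (Hl : forall J, J \in S -> #|J| = l)
  (Ht : (0 < t)%N) (Htl : (t <= l)%N) :
  let lhs : R := ((size S)%:R ^+ 2)^-1 *
     \sum_(J <- S) \sum_(J' <- S) (#|J :&: J'| ^ t)%:R in
  let rhs : R := \tr (Dcoh R t l m *m Dcoh R t l m) in
  rhs <= lhs /\
  (lhs = rhs <->
   exists lambda : nat,
     is_block_design t l lambda S /\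
     lambda%:R = (size S)%:R *
       \tr (Dcoh R t l m *m kron_prod (fun s => Ess R m s) t)).
Proof.
move=> lhs rhs.
pose f (x : 'I_(kdim m t)) := block_freq R S (kron_support x).
pose g (x : 'I_(kdim m t)) := block_freq R (complete_design m l) (kron_support x).
have [J0 J0S] : exists J0, J0 \in S by exists (nth set0 S 0); rewrite mem_nth // lt0n.
have lelm : (l <= m)%N by rewrite -(Hl J0 J0S); have := max_card J0; rewrite card_ord.
have letm := leq_trans Htl lelm.
have [le_rhs_lhs eq_fg] : rhs <= lhs /\ (lhs = rhs <-> forall x, f x = g x).
  apply: sub_eq_sumr_sqr => [x|]; first by rewrite realB // ger0_real // divr_ge0.
  rewrite /lhs mean_card_setI_exp /rhs DcohE mxtrace_mul_diag -sumr_sqr_sub //.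
  by apply: sum_block_freq_mul_complete; rewrite ?Htl.
split=> //; split=> [/eq_fg fg|[lambda [desS _]]]; last first.
  apply/eq_fg => x; apply: block_freq_design desS HS (card_kron_support_le x) _.
  by rewrite Htl.
exists (count_sup S [set i : 'I_m | (i < t)%N]); split.
  apply: (block_design_of_block_freq Hl HS (card_ord_ltn letm) Htl).
  by move=> T /kron_support_onto[x <-]; exact: fg.
rewrite mxtrace_Dcoh_kron_Ess //; have [x0 <-] := kron_support_onto (card_ord_ltn letm).
by rewrite -/(g x0) -fg /f /block_freq mulrC divfK // pnatr_eq0.
Qed.
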